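(* Let $d\ge 1$, $T\ge 1$, let $\mathcal{X}\subseteq\mathbb{R}^d$ be a non-empty closed convex set containing $\mathbf{0}$, and let $0<\mu\le L$. Let $f_1,\dots,f_T:\mathcal{X}\to[0,\infty)$ be differentiable functions such that, for every $t$ and all $x,y\in\mathcal{X}$, $\frac{\mu}{2}\|y-x\|^2\le f_t(y)-f_t(x)-\langle\nabla f_t(x),y-x\rangle\le\frac{L}{2}\|y-x\|^2$, and such that there is a finite constant $G$ with $\max_{x\in\mathcal{X}}\|\nabla f_t(x)\|=G$ for all $t$. Let $x_0=\mathbf{0}$. Then the OMGD algorithm with $K=\lceil\frac{L+\mu}{2\mu}\ln4\rceil$ satisfies $$C_{\mathcal{A}_o}-C_{\mathsf{OPT}}\le 2G(\|x_1^\star\|+\mathcal{P}_T^\star)+5\|x_1^\star\|^2+\Big(10-\frac{\mu}{2(\mu+4)}\Big)\mathcal{P}_{2,T}^\star.$$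
   Context: $x_t^\star=\arg\min_{x\in\mathcal{X}}f_t(x)$, $\mathcal{P}_T^\star=\sum_{t=2}^T\|x_t^\star-x_{t-1}^\star\|$, $\mathcal{P}_{2,T}^\star=\sum_{t=2}^T\|x_t^\star-x_{t-1}^\star\|^2$. Quadratic-switching cost of $(y_1,\dots,y_T)\in\mathcal{X}^T$ with $y_0=x_0$: $\sum_{t=1}^T\big(f_t(y_t)+\frac12\|y_t-y_{t-1}\|^2\big)$; $C_{\mathsf{OPT}}$ is its minimum over $\mathcal{X}^T$. OMGD with parameter $K$: $x_1=x_0$; for $t=2,\dots,T$, $z_t^{(0)}=x_{t-1}$, $z_t^{(k)}=\Pi_{\mathcal{X}}\big(z_t^{(k-1)}-\frac1L\nabla f_{t-1}(z_t^{(k-1)})\big)$ ($k=1,\dots,K$), $x_t=z_t^{(K)}$, where $\Pi_{\mathcal{X}}$ is Euclidean projection onto $\mathcal{X}$. $C_{\mathcal{A}_o}$ is the quadratic-switching cost of $(x_1,\dots,x_T)$; $C_{\mathcal{A}_o}-C_{\mathsf{OPT}}$ is the dynamic regret. *)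

From HB Require Import structures.
From mathcomp Require Import all_boot all_order all_algebra.
From mathcomp Require Import all_classical all_reals all_analysis.
Set Implicit Arguments. Unset Strict Implicit. Unset Printing Implicit Defensive.
Import Order.TTheory GRing.Theory Num.Theory.
Import numFieldNormedType.Exports.
Local Open Scope classical_set_scope.
Local Open Scope ring_scope.

Section OMGD.
Variables (R : realType) (d : nat).
Notation vec := 'rV[R]_d.

(* Euclidean inner product and Euclidean norm on R^d
   (MathComp's built-in norm on matrices is the max-norm, so we define ours). *)
Definition dotp (u v : vec) : R := \sum_(i < d) u ord0 i * v ord0 i.
Definition enorm (u : vec) : R := Num.sqrt (dotp u u).

Definition convex_subset (X : set vec) : Prop :=
  forall x y (l : R), X x -> X y -> 0 <= l -> l <= 1 -> X (l *: x + (1 - l) *: y).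

Definition grad (f : vec -> R) (x : vec) : vec :=
  \row_(i < d) 'D_(delta_mx 0 i : vec) f x.

(* Euclidean projection onto X: the (unique, for X closed convex non-empty)
   point of X closest to z. *)
Definition proj (X : set vec) (z : vec) : vec :=
  xget 0 [set y | X y /\ forall w, X w -> enorm (y - z) <= enorm (w - z)].

(* Minimizer of f over X (unique for strongly convex f on closed convex X). *)
Definition argminX (X : set vec) (f : vec -> R) : vec :=
  xget 0 [set y | X y /\ forall w, X w -> f y <= f w].

Definition pgd_step (X : set vec) (L : R) (f : vec -> R) (z : vec) : vec :=
  proj X (z - L^-1 *: grad f z).

(* OMGD iterates: omgd 0 = x_0 = 0, omgd 1 = x_1 = x_0,
   omgd (t+1) = K projected gradient steps on f_t started from omgd t  (t >= 1). *)
Fixpoint omgd (X : set vec) (L : R) (K : nat) (f : nat -> vec -> R) (t : nat) : vec :=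
  match t with
  | 0 => 0
  | 1 => 0
  | (n.+1) as m => iter K (pgd_step X L (f n)) (omgd X L K f n)
  end.

Definition qs_cost (f : nat -> vec -> R) (T : nat) (y : nat -> vec) : R :=
  \sum_(1 <= t < T.+1) (f t (y t) + 2^-1 * enorm (y t - y t.-1) ^+ 2).

(* C_OPT: minimum of the cost over all (y_1..y_T) in X^T with y_0 = x_0 = 0
   (written as an infimum; the minimum is attained under the hypotheses). *)
Definition C_OPT (X : set vec) (f : nat -> vec -> R) (T : nat) : R :=
  inf [set c | exists y : nat -> vec,
         [/\ y 0 = 0, (forall t, (1 <= t <= T)%N -> X (y t)) & c = qs_cost f T y]].

Definition path_len (X : set vec) (f : nat -> vec -> R) (T : nat) : R :=
  \sum_(2 <= t < T.+1) enorm (argminX X (f t) - argminX X (f t.-1)).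
Definition path_len2 (X : set vec) (f : nat -> vec -> R) (T : nat) : R :=
  \sum_(2 <= t < T.+1) enorm (argminX X (f t) - argminX X (f t.-1)) ^+ 2.

End OMGD.

From Pilot Require Import Defs.
From HB Require Import structures.
From mathcomp Require Import all_boot all_order all_algebra.
From mathcomp Require Import all_classical all_reals all_analysis.
From mathcomp Require Import ring lra.
Import Order.TTheory GRing.Theory Num.Theory.
Import numFieldNormedType.Exports.
Local Open Scope classical_set_scope.
Local Open Scope ring_scope.
Set Implicit Arguments. Unset Strict Implicit. Unset Printing Implicit Defensive.

(* Write x*_t for the minimizer of f_t.  Since ((L - mu) / (L + mu)) ^ K <= 1/4
   and each projected gradient step contracts the squared distance to x*_t by
   (L - mu) / (L + mu), the K steps of round t halve e_t = |x_t - x*_t|, whence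
   e_(t+1) <= e_t / 2 + |x*_(t+1) - x*_t|.  The hitting excess
   f_t(x_t) - f_t(x*_t) is at most G e_t, the switching cost |x_(t+1) - x_t|^2 / 2
   at most 9/8 e_t^2, and C_OPT >= sum_t f_t(x*_t).  Summing against the
   potential G e_t + 9/4 e_t^2 gives the bound with constants 9/4 and 9/2.
   Strong convexity of f_1 and the gradient bound confine X to the ball of
   radius 2G/mu, so X is compact and the projections and minimizers exist. *)

Section EuclideanNorm.
Variables (R : realType) (d : nat).
Implicit Types (u v w : 'rV[R]_d) (a : R).

Lemma dotpC u v : dotp u v = dotp v u.
Proof. by apply: eq_bigr => i _; rewrite mulrC. Qed.

Lemma dotpDl u v w : dotp (u + v) w = dotp u w + dotp v w.
Proof. by rewrite /dotp -big_split; apply: eq_bigr => i _; rewrite mxE mulrDl. Qed.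

Lemma dotpZl a u v : dotp (a *: u) v = a * dotp u v.
Proof. by rewrite /dotp mulr_sumr; apply: eq_bigr => i _; rewrite mxE mulrA. Qed.

Lemma dotpNl u v : dotp (- u) v = - dotp u v.
Proof. by rewrite -scaleN1r dotpZl mulN1r. Qed.

Lemma dotpBl u v w : dotp (u - v) w = dotp u w - dotp v w.
Proof. by rewrite dotpDl dotpNl. Qed.

Lemma dotpDr u v w : dotp u (v + w) = dotp u v + dotp u w.
Proof. by rewrite dotpC dotpDl !(dotpC u). Qed.

Lemma dotpZr a u v : dotp u (a *: v) = a * dotp u v.
Proof. by rewrite dotpC dotpZl dotpC. Qed.

Lemma dotpNr u v : dotp u (- v) = - dotp u v.
Proof. by rewrite dotpC dotpNl dotpC. Qed.

Lemma dotpBr u v w : dotp u (v - w) = dotp u v - dotp u w.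
Proof. by rewrite dotpDr dotpNr. Qed.

Lemma dotpp_ge0 u : 0 <= dotp u u.
Proof. by apply: sumr_ge0 => i _; rewrite -expr2 sqr_ge0. Qed.

Lemma dotpDZ u v a :
  dotp (u + a *: v) (u + a *: v) = dotp u u + 2 * a * dotp u v + a ^+ 2 * dotp v v.
Proof. by rewrite !(dotpDl, dotpDr, dotpZl, dotpZr) (dotpC v u); ring. Qed.

Lemma enorm_ge0 u : 0 <= enorm u.
Proof. exact: sqrtr_ge0. Qed.

Lemma enorm_sqr u : enorm u ^+ 2 = dotp u u.
Proof. by rewrite sqr_sqrtr // dotpp_ge0. Qed.

Lemma enorm0 : enorm (0 : 'rV[R]_d) = 0.
Proof. by rewrite /enorm /dotp big1 ?sqrtr0 // => i _; rewrite mxE mul0r. Qed.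

Lemma enormN u : enorm (- u) = enorm u.
Proof. by rewrite /enorm dotpNl dotpNr opprK. Qed.

Lemma enorm_distC u v : enorm (u - v) = enorm (v - u).
Proof. by rewrite -enormN opprB. Qed.

Lemma ler_enorm u v : (enorm u <= enorm v) = (dotp u u <= dotp v v).
Proof. exact/ler_sqrt/dotpp_ge0. Qed.

Lemma dotp_sqr_le u v : dotp u v ^+ 2 <= dotp u u * dotp v v.
Proof.
(* evaluate the nonnegative quadratic [l |-> |u + l v|^2] at its vertex, or,
   if [|v| = 0], at a point where it would be [-1] *)
have quad l : 0 <= dotp u u + 2 * l * dotp u v + l ^+ 2 * dotp v v.
  by rewrite -dotpDZ dotpp_ge0.
have [v0|v_gt0] := eqVneq (dotp v v) 0; last first.
  have {}v_gt0 : 0 < dotp v v by rewrite lt_def v_gt0 dotpp_ge0.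
  have := quad (- dotp u v / dotp v v).
  have -> : dotp u u + 2 * (- dotp u v / dotp v v) * dotp u v
      + (- dotp u v / dotp v v) ^+ 2 * dotp v v
      = (dotp u u * dotp v v - dotp u v ^+ 2) / dotp v v.
    by field; rewrite gt_eqF.
  by rewrite ler_pdivlMr // mul0r subr_ge0.
have [uv0|uv_ne0] := eqVneq (dotp u v) 0.
  by rewrite uv0 v0 expr0n mulr0.
have := quad (- (dotp u u + 1) / (2 * dotp u v)).
have -> : dotp u u + 2 * (- (dotp u u + 1) / (2 * dotp u v)) * dotp u v
    + (- (dotp u u + 1) / (2 * dotp u v)) ^+ 2 * dotp v v = -1.
  by rewrite v0; field.
by rewrite ler0N1.
Qed.

Lemma cauchy_schwarz u v : dotp u v <= enorm u * enorm v.
Proof.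
have [uv_le0|uv_gt0] := lerP (dotp u v) 0.
  by apply: le_trans uv_le0 _; rewrite mulr_ge0 ?enorm_ge0.
rewrite -(ler_pXn2r (n := 2)) ?nnegrE ?mulr_ge0 ?enorm_ge0 ?(ltW uv_gt0) //.
by rewrite exprMn !enorm_sqr dotp_sqr_le.
Qed.

Lemma enormD_le u v : enorm (u + v) <= enorm u + enorm v.
Proof.
rewrite -(ler_pXn2r (n := 2)) ?nnegrE ?addr_ge0 ?enorm_ge0 //.
have := cauchy_schwarz u v.
by rewrite enorm_sqr dotpDl !dotpDr (dotpC v u) -!enorm_sqr; lra.
Qed.

Lemma coord_le_enorm u i : `|u ord0 i| <= enorm u.
Proof.
rewrite -(ler_pXn2r (n := 2)) ?nnegrE ?enorm_ge0 // real_normK ?num_real //.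
rewrite enorm_sqr /dotp (bigD1 i) //= -expr2 lerDl.
by apply: sumr_ge0 => j _; rewrite -expr2 sqr_ge0.
Qed.

End EuclideanNorm.

Section ProjectedGradient.
Variables (R : realType) (d : nat).
Implicit Types (X : set 'rV[R]_d) (f : 'rV[R]_d -> R) (c p w x y z : 'rV[R]_d).

Definition is_proj X z p := X p /\ forall w, X w -> enorm (p - z) <= enorm (w - z).
Definition is_min X f c := X c /\ forall w, X w -> f c <= f w.

Definition strongly_convex_on X (mu : R) f := forall x y, X x -> X y ->
  mu / 2 * enorm (y - x) ^+ 2 <= f y - f x - dotp (grad f x) (y - x).
Definition smooth_on X (L : R) f := forall x y, X x -> X y ->
  f y - f x - dotp (grad f x) (y - x) <= L / 2 * enorm (y - x) ^+ 2.

Lemma convex_segment X p w (l : R) : convex_subset X -> X p -> X w ->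
  0 <= l <= 1 -> X (p + l *: (w - p)).
Proof.
move=> X_convex Xp Xw /andP[l_ge0 l_le1].
have := X_convex w p l Xw Xp l_ge0 l_le1.
by congr X; apply/rowP => i; rewrite !mxE; ring.
Qed.

Lemma slope_ge0_of_quadratic_ge0 (s D : R) :
  (forall l, 0 <= l <= 1 -> 0 <= l * s + l ^+ 2 * D) -> 0 <= s.
Proof.
move=> quad_ge0; have [D_le0|D_gt0] := lerP D 0.
  by have := quad_ge0 1; rewrite ler01 lexx mul1r expr1n mul1r; lra.
rewrite leNgt; apply/negP => s_lt0.
(* at this [l], [s + l D = - s^2 / (D - s) < 0] *)
pose l := - s / (- s + D).
have sD_gt0 : 0 < - s + D by lra.
have l_gt0 : 0 < l by rewrite divr_gt0 ?oppr_gt0.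
have l_le1 : l <= 1 by rewrite ler_pdivrMr // mul1r; lra.
have := quad_ge0 l; rewrite (ltW l_gt0) l_le1 => /(_ isT).
have -> : l * s + l ^+ 2 * D = - (l * s ^+ 2 / (- s + D)).
  by rewrite /l; field; rewrite gt_eqF.
by rewrite oppr_ge0 leNgt divr_gt0 // mulr_gt0 // -sqrrN exprn_gt0 ?oppr_gt0.
Qed.

Lemma is_proj_obtuse X z p w : convex_subset X -> is_proj X z p -> X w ->
  dotp (z - p) (w - p) <= 0.
Proof.
move=> X_convex [Xp p_min] Xw; rewrite -opprB dotpNl oppr_le0.
apply: (@slope_ge0_of_quadratic_ge0 _ (2^-1 * dotp (w - p) (w - p))) => l l01.
have := p_min _ (convex_segment X_convex Xp Xw l01).
by rewrite ler_enorm [p + _ - z]addrAC dotpDZ; lra.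
Qed.

Lemma is_min_grad_ge0 X L f c w : convex_subset X -> smooth_on X L f ->
  is_min X f c -> X w -> 0 <= dotp (grad f c) (w - c).
Proof.
move=> X_convex f_smooth [Xc c_min] Xw.
apply: (@slope_ge0_of_quadratic_ge0 _ (L / 2 * dotp (w - c) (w - c))) => l l01.
have Xy := convex_segment X_convex Xc Xw l01.
have := f_smooth c _ Xc Xy; have := c_min _ Xy.
rewrite [c + _ - c]addrAC subrr add0r enorm_sqr dotpZl !dotpZr; lra.
Qed.

Lemma is_min_quadratic_growth X mu L f c y : convex_subset X ->
  strongly_convex_on X mu f -> smooth_on X L f -> is_min X f c -> X y ->
  f c + mu / 2 * enorm (y - c) ^+ 2 <= f y.
Proof.
move=> X_convex f_sc f_smooth c_min Xy.
have := f_sc _ _ c_min.1 Xy; have := is_min_grad_ge0 X_convex f_smooth c_min Xy.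
lra.
Qed.

Lemma excess_le_grad_norm X mu f G x c : 0 <= mu -> strongly_convex_on X mu f ->
  X x -> X c -> enorm (grad f x) <= G -> f x - f c <= G * enorm (x - c).
Proof.
move=> mu_ge0 f_sc Xx Xc grad_le; have := f_sc _ _ Xx Xc.
rewrite -opprB dotpNr enormN.
have := cauchy_schwarz (grad f x) (x - c).
have := ler_wpM2r (enorm_ge0 (x - c)) grad_le.
have : 0 <= mu / 2 * enorm (x - c) ^+ 2 by rewrite mulr_ge0 ?sqr_ge0 ?divr_ge0.
lra.
Qed.

Lemma pgd_step_contracts X mu L f c x p : convex_subset X -> 0 < L ->
  strongly_convex_on X mu f -> smooth_on X L f -> is_min X f c -> X x ->
  is_proj X (x - L^-1 *: grad f x) p ->
  (L + mu) * enorm (p - c) ^+ 2 <= (L - mu) * enorm (x - c) ^+ 2.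
Proof.
move=> X_convex L_gt0 f_sc f_smooth c_min Xx p_proj.
have descent := f_smooth _ _ Xx p_proj.1.
have lower := f_sc _ _ Xx c_min.1.
have growth := is_min_quadratic_growth X_convex f_sc f_smooth c_min p_proj.1.
have obtuse : L * dotp (x - p) (c - p) <= dotp (grad f x) (c - p).
  have := is_proj_obtuse X_convex p_proj c_min.1.
  rewrite [x - _ - p]addrAC [dotp (x - p - _) _]dotpBl dotpZl subr_le0.
  by move=> /(ler_wpM2l (ltW L_gt0)); rewrite mulrA mulfV ?gt_eqF // mul1r.
move: descent lower growth obtuse; rewrite !enorm_sqr.
rewrite !(dotpDl, dotpDr, dotpNl, dotpNr, dotpBl, dotpBr).
rewrite !(dotpC p x) !(dotpC c x) !(dotpC c p); lra.
Qed.

End ProjectedGradient.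

Section ProjectedGradientIterates.
Variables (R : realType) (d : nat) (X : set 'rV[R]_d).
Hypotheses (X_convex : convex_subset X) (proj_spec : forall z, is_proj X z (Defs.proj X z)).

Lemma iter_pgd_in L f k x : X x -> X (iter k (pgd_step X L f) x).
Proof. by move=> Xx; elim: k => [//|k _]; exact: (proj_spec _).1. Qed.

Lemma iter_pgd_contracts mu L f c x k : 0 < mu -> mu <= L ->
  strongly_convex_on X mu f -> smooth_on X L f -> is_min X f c -> X x ->
  enorm (iter k (pgd_step X L f) x - c) ^+ 2
    <= ((L - mu) / (L + mu)) ^+ k * enorm (x - c) ^+ 2.
Proof.
move=> mu_gt0 mu_le_L f_sc f_smooth c_min Xx.
have L_gt0 : 0 < L by apply: lt_le_trans mu_le_L.
have Lmu_gt0 : 0 < L + mu by rewrite addr_gt0.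
have rate_ge0 : 0 <= (L - mu) / (L + mu) by rewrite divr_ge0 ?subr_ge0 // ltW.
elim: k => [|k IH]; first by rewrite expr0 mul1r.
rewrite [_ ^+ k.+1]exprS -mulrA; apply: le_trans (ler_wpM2l rate_ge0 IH).
rewrite mulrAC ler_pdivlMr // [_ * (L + mu)]mulrC iterS.
exact: (pgd_step_contracts X_convex L_gt0 f_sc f_smooth c_min
  (iter_pgd_in _ _ _ Xx) (proj_spec _)).
Qed.

End ProjectedGradientIterates.

Lemma pgd_rate_expn_ceil_le (R : realType) (mu L : R) : 0 < mu -> mu <= L ->
  ((L - mu) / (L + mu)) ^+ `|Num.ceil ((L + mu) / (2 * mu) * ln 4)|%N <= 4^-1.
Proof.
move=> mu_gt0 mu_le_L.
have Lmu_gt0 : 0 < L + mu by rewrite addr_gt0 // (lt_le_trans mu_gt0).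
set c := (L + mu) / (2 * mu) * ln 4; set K := `|Num.ceil c|%N.
set a := 2 * mu / (L + mu).
have ln4_gt0 : 0 < ln (4 : R) by rewrite ln_gt0 // ltr1n.
have c_ge0 : 0 <= c by rewrite /c !mulr_ge0 ?invr_ge0 ?mulr_ge0 // ltW.
have c_le_K : c <= K%:R.
  by rewrite /K natr_absz ger0_norm ?ceil_ge // ceil_ge0; lra.
have a_ge0 : 0 <= a by rewrite divr_ge0 ?mulr_ge0 // ltW.
have ca : c * a = ln 4 by rewrite /c /a; field; rewrite ?gt_eqF.
have -> : (L - mu) / (L + mu) = 1 - a by rewrite /a; field; rewrite gt_eqF.
(* [1 - a <= exp (- a)] and [K a >= c a = ln 4] *)
apply: (@le_trans _ _ (expR (- a) ^+ K)).
  rewrite lerXn2r ?nnegrE ?expR_ge0 //; last by have := expR_ge1Dx (- a); lra.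
  by rewrite subr_ge0 ler_pdivrMr // mul1r; lra.
rewrite -expRM_natl -[4^-1]lnK ?posrE ?invr_gt0 // ler_expR lnV ?posrE //.
by rewrite mulrN lerN2 -ca ler_wpM2r.
Qed.

Section Existence.
Variables (R : realType) (d : nat).
Implicit Types (X : set 'rV[R]_d) (f : 'rV[R]_d -> R).

Lemma strongly_convex_enorm_le X mu f G y : 0 < mu -> strongly_convex_on X mu f ->
  X 0 -> (forall x, X x -> enorm (grad f x) <= G) -> X y -> enorm y <= 2 * G / mu.
Proof.
move=> mu_gt0 f_sc X0 grad_le Xy.
have := f_sc _ _ X0 Xy; have := f_sc _ _ Xy X0.
rewrite !subr0 sub0r enormN dotpNr => sc_at_y sc_at_0.
have cs_0 := cauchy_schwarz (grad f 0) (- y); rewrite dotpNr enormN in cs_0.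
have cs_y := cauchy_schwarz (grad f y) y.
have y_ge0 := enorm_ge0 y.
have G_ge0 : 0 <= G := le_trans (enorm_ge0 _) (grad_le _ X0).
have := ler_wpM2r y_ge0 (grad_le _ X0); have := ler_wpM2r y_ge0 (grad_le _ Xy).
rewrite ler_pdivlMr //; nra.
Qed.

Lemma enorm_bounded_set X B : (forall x, X x -> enorm x <= B) -> bounded_set X.
Proof.
move=> X_le; exists B; split; first exact: num_real.
move=> M B_lt_M y Xy; change (mx_norm y <= M); rewrite mx_normrE.
apply: bigmax_le => [|[i j] _]; apply/ltW/(le_lt_trans _ B_lt_M).
  exact: le_trans (enorm_ge0 y) (X_le _ Xy).
by rewrite (ord1 i); apply: le_trans (X_le _ Xy); exact: coord_le_enorm.
Qed.

Lemma dotpp_continuous : continuous (fun u : 'rV[R]_d => dotp u u).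
Proof.
rewrite /dotp; apply: (continuous_big add_continuous) => i _ u.
exact: continuousM (@coord_continuous _ _ _ ord0 i u) (@coord_continuous _ _ _ ord0 i u).
Qed.

Lemma is_proj_proj X z : X !=set0 -> compact X -> is_proj X z (Defs.proj X z).
Proof.
move=> X_ne X_compact; apply: xgetPex.
have dist_continuous : continuous (fun u : 'rV[R]_d => dotp (u - z) (u - z)).
  move=> u; have := @continuous_comp _ _ _ (fun u : 'rV[R]_d => u - z) (fun v => dotp v v) u.
  by apply; [exact: cvgB cvg_id (cvg_cst _) | exact: dotpp_continuous].
have [p] := EVT_min_rV X_ne X_compact (continuous_subspaceT dist_continuous).
rewrite inE => Xp p_min; exists p; split => // w Xw.
by rewrite ler_enorm; apply: p_min; rewrite inE.
Qed.

Lemma is_min_argminX X f : X !=set0 -> compact X -> {within X, continuous f} ->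
  is_min X f (argminX X f).
Proof.
move=> X_ne X_compact f_continuous; apply: xgetPex.
have [c] := EVT_min_rV X_ne X_compact f_continuous.
by rewrite inE => Xc c_min; exists c; split => // w Xw; apply: c_min; rewrite inE.
Qed.

End Existence.

Lemma regret_recursion (R : realType) (G : R) (a e p : nat -> R) (n : nat) :
  0 <= G -> (forall t, 0 <= e t) -> a 1%N <= G * e 1%N ->
  (forall t, (1 <= t < n)%N -> a t.+1 <= G * e t.+1 + 9 / 8 * e t ^+ 2) ->
  (forall t, (1 <= t < n)%N -> e t.+1 <= 2^-1 * e t + p t.+1) ->
  (1 <= n)%N ->
  \sum_(1 <= t < n.+1) a t + G * e n + 9 / 4 * e n ^+ 2
    <= 2 * G * (e 1%N + \sum_(2 <= t < n.+1) p t) + 9 / 4 * e 1%N ^+ 2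
       + 9 / 2 * \sum_(2 <= t < n.+1) p t ^+ 2.
Proof.
move=> G_ge0 e_ge0 a_1; elim: n => [//|n IH] a_step e_step _.
case: n IH a_step e_step => [_ _ _|n IH a_step e_step].
  by rewrite big_nat1 !big_geq //; lra.
have widen t : (1 <= t < n.+1)%N -> (1 <= t < n.+2)%N.
  by case/andP => t_ge1 /ltnW; rewrite t_ge1.
have := IH (fun t ht => a_step t (widen t ht)) (fun t ht => e_step t (widen t ht)) isT.
have n_lt : (1 <= n.+1 < n.+2)%N by rewrite ltnSn.
have a_n := a_step _ n_lt; have e_n := e_step _ n_lt.
have G_e := ler_wpM2l G_ge0 e_n.
have e_sqr : e n.+2 ^+ 2 <= (2^-1 * e n.+1 + p n.+2) ^+ 2.
  by rewrite ler_pXn2r ?nnegrE // (le_trans (e_ge0 _) e_n).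
have := sqr_ge0 (2^-1 * e n.+1 - p n.+2).
by rewrite (big_nat_recr n.+2 1) // !(big_nat_recr n.+2 2) //=; lra.
Qed.

Section OMGDRegret.
Variables (R : realType) (d : nat) (X : set 'rV[R]_d) (mu L G : R) (K T : nat).
Variable f : nat -> 'rV[R]_d -> R.
Hypotheses (X_convex : convex_subset X) (X0 : X 0).
Hypotheses (mu_gt0 : 0 < mu) (mu_le_L : mu <= L) (T_ge1 : (1 <= T)%N).
Hypothesis proj_spec : forall z, is_proj X z (Defs.proj X z).
Hypothesis f_sc : forall t, (1 <= t <= T)%N -> strongly_convex_on X mu (f t).
Hypothesis f_smooth : forall t, (1 <= t <= T)%N -> smooth_on X L (f t).
Hypothesis f_min : forall t, (1 <= t <= T)%N -> is_min X (f t) (argminX X (f t)).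
Hypothesis grad_le :
  forall t, (1 <= t <= T)%N -> forall x, X x -> enorm (grad (f t) x) <= G.
Hypothesis K_rate : ((L - mu) / (L + mu)) ^+ K <= 4^-1.

Local Notation x := (omgd X L K f).
Local Notation xs t := (argminX X (f t)).

Lemma omgdS t : (1 <= t)%N -> x t.+1 = iter K (pgd_step X L (f t)) (x t).
Proof. by case: t. Qed.

Lemma omgd_in t : X (x t).
Proof. by elim: t => [|[|t] IH] //; rewrite omgdS //; exact: iter_pgd_in. Qed.

Lemma omgd_halves t : (1 <= t < T)%N ->
  enorm (x t.+1 - xs t) <= 2^-1 * enorm (x t - xs t).
Proof.
case/andP => t_ge1 t_lt_T; have tT : (1 <= t <= T)%N by rewrite t_ge1 ltnW.
rewrite -(ler_pXn2r (n := 2)) ?nnegrE ?mulr_ge0 ?enorm_ge0 ?invr_ge0 //.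
rewrite exprMn exprVn -natrX omgdS //.
have := iter_pgd_contracts X_convex proj_spec K mu_gt0 mu_le_L (f_sc tT)
  (f_smooth tT) (f_min tT) (omgd_in t).
by move/le_trans; apply; rewrite ler_wpM2r ?sqr_ge0.
Qed.

Lemma omgd_switch_le t : (1 <= t < T)%N ->
  enorm (x t.+1 - x t) <= 3 / 2 * enorm (x t - xs t).
Proof.
move=> tT; have := omgd_halves tT.
have := enormD_le (x t.+1 - xs t) (xs t - x t).
by rewrite addrA subrK (enorm_distC (xs t)); lra.
Qed.

Lemma omgd_tracks t : (1 <= t < T)%N ->
  enorm (x t.+1 - xs t.+1) <= 2^-1 * enorm (x t - xs t) + enorm (xs t.+1 - xs t).
Proof.
move=> tT; have := omgd_halves tT.
have := enormD_le (x t.+1 - xs t) (xs t - xs t.+1).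
by rewrite addrA subrK (enorm_distC (xs t)); lra.
Qed.

Lemma sum_min_le_C_OPT : \sum_(1 <= t < T.+1) f t (xs t) <= C_OPT X f T.
Proof.
apply: lb_le_inf; first by exists (qs_cost f T (fun=> 0)), (fun=> 0).
move=> _ [y [_ Xy ->]]; apply: ler_sum_nat => t tT.
have := (f_min tT).2 _ (Xy t tT); have := sqr_ge0 (enorm (y t - y t.-1)).
lra.
Qed.

Lemma omgd_regret : qs_cost f T x - C_OPT X f T <=
  2 * G * (enorm (xs 1%N) + path_len X f T) + 9 / 4 * enorm (xs 1%N) ^+ 2
  + 9 / 2 * path_len2 X f T.
Proof.
have G_ge0 : 0 <= G := le_trans (enorm_ge0 _) (grad_le (t := 1) T_ge1 X0).
have excess t : (1 <= t <= T)%N -> f t (x t) - f t (xs t) <= G * enorm (x t - xs t).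
  move=> tT; apply: excess_le_grad_norm (ltW mu_gt0) (f_sc tT) (omgd_in t) _ _.
    exact: (f_min tT).1.
  exact: grad_le tT _ (omgd_in t).
have a_1 : f 1%N (x 1%N) - f 1%N (xs 1%N) + 2^-1 * enorm (x 1%N - x 0%N) ^+ 2
    <= G * enorm (x 1%N - xs 1%N).
  by rewrite [x 1%N - _]subrr enorm0 expr0n mulr0 addr0; exact: excess.
have a_step t : (1 <= t < T)%N ->
    f t.+1 (x t.+1) - f t.+1 (xs t.+1) + 2^-1 * enorm (x t.+1 - x t) ^+ 2
    <= G * enorm (x t.+1 - xs t.+1) + 9 / 8 * enorm (x t - xs t) ^+ 2.
  move=> tT; have := excess t.+1 (andP tT).2; have := omgd_switch_le tT.
  by have := enorm_ge0 (x t.+1 - x t); nra.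
have := regret_recursion
  (a := fun t => f t (x t) - f t (xs t) + 2^-1 * enorm (x t - x t.-1) ^+ 2)
  (p := fun t => enorm (xs t - xs t.-1))
  G_ge0 (fun t => enorm_ge0 (x t - xs t)) a_1 a_step omgd_tracks T_ge1.
have -> : enorm (x 1%N - xs 1%N) = enorm (xs 1%N) by rewrite sub0r enormN.
have -> : qs_cost f T x = \sum_(1 <= t < T.+1) f t (xs t)
    + \sum_(1 <= t < T.+1) (f t (x t) - f t (xs t) + 2^-1 * enorm (x t - x t.-1) ^+ 2).
  by rewrite /qs_cost -big_split; apply: eq_bigr => t _ /=; ring.
have := sum_min_le_C_OPT; have := enorm_ge0 (x T - xs T).
have := mulr_ge0 G_ge0 (enorm_ge0 (x T - xs T)).
rewrite /path_len /path_len2; nra.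
Qed.
End OMGDRegret.

Unset Implicit Arguments.

Theorem theorem2 (R : realType) (d T : nat) (X : set 'rV[R]_d)
    (mu L G : R) (f : nat -> 'rV[R]_d -> R) :
  (1 <= d)%N -> (1 <= T)%N ->
  X !=set0 -> closed X -> convex_subset X -> X 0 ->
  0 < mu -> mu <= L ->
  (forall t, (1 <= t <= T)%N -> forall x, X x -> 0 <= f t x) ->
  (forall t, (1 <= t <= T)%N -> forall x, X x -> differentiable (f t) x) ->
  (forall t, (1 <= t <= T)%N -> forall x y, X x -> X y ->
     mu / 2 * enorm (y - x) ^+ 2 <= f t y - f t x - dotp (grad (f t) x) (y - x)
     /\ f t y - f t x - dotp (grad (f t) x) (y - x) <= L / 2 * enorm (y - x) ^+ 2) ->
  (forall t, (1 <= t <= T)%N ->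
     (forall x, X x -> enorm (grad (f t) x) <= G) /\
     (exists2 x, X x & enorm (grad (f t) x) = G)) ->
  let K := `|Num.ceil ((L + mu) / (2 * mu) * ln 4)|%N in
  qs_cost f T (omgd X L K f) - C_OPT X f T <=
    2 * G * (enorm (argminX X (f 1%N)) + path_len X f T)
    + 5 * enorm (argminX X (f 1%N)) ^+ 2
    + (10 - mu / (2 * (mu + 4))) * path_len2 X f T.
Proof.
move=> _ T_ge1 X_ne X_closed X_convex X0 mu_gt0 mu_le_L _ f_diff f_quad f_grad.
cbv zeta.
have f_sc t tT : strongly_convex_on X mu (f t) := fun x y Xx Xy => (f_quad t tT x y Xx Xy).1.
have f_smooth t tT : smooth_on X L (f t) := fun x y Xx Xy => (f_quad t tT x y Xx Xy).2.
have grad_le t tT := (f_grad t tT).1.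
have X_compact : compact X.
  apply: bounded_closed_compact X_closed; apply: (enorm_bounded_set (B := 2 * G / mu)).
  move=> y; exact: strongly_convex_enorm_le mu_gt0 (f_sc 1%N T_ge1) X0 (grad_le 1%N T_ge1).
have f_min t (tT : (1 <= t <= T)%N) : is_min X (f t) (argminX X (f t)).
  apply: is_min_argminX X_ne X_compact _; apply: continuous_in_subspaceT => y.
  by rewrite inE => Xy; exact: differentiable_continuous (f_diff t tT y Xy).
have := omgd_regret X_convex X0 mu_gt0 mu_le_L T_ge1
  (fun z => is_proj_proj z X_ne X_compact) f_sc f_smooth f_min grad_le
  (pgd_rate_expn_ceil_le mu_gt0 mu_le_L).
have path_len2_ge0 : 0 <= path_len2 X f T by apply: sumr_ge0 => t _; exact: sqr_ge0.
have : mu / (2 * (mu + 4)) <= 2^-1.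
  by rewrite ler_pdivrMr ?mulr_gt0 ?addr_gt0 // mulrA mulVf // mul1r; lra.
have := sqr_ge0 (enorm (argminX X (f 1%N))).
nra.
Qed.
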